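(* Let $m,n$ be coprime positive integers with $\sqrt3 < m/n \le 3$, let $p = m^2-3n^2$, $r = 2mn$, $q = m^2+3n^2$, and let $\theta\in[\pi/3,\pi/2)$ be the angle with $\cos\theta = p/q$, $\sin\theta = \frac{r}{q}\sqrt3$. Then the lattice $$\Omega_\theta = \begin{bmatrix} m & m \\ n\sqrt3 & -n\sqrt3\end{bmatrix}\mathbb{Z}^2$$ belongs to $\mathrm{WR}(\Lambda_h)$, and satisfies $|\Omega_\theta| = q$, $\det(\Omega_\theta) = r\sqrt3$, $|\Lambda_h:\Omega_\theta| = 2r$, and $\Omega_\theta \in C_h(\theta)$. Hence $C_h(\theta)$ is the set of all lattices in $\mathrm{WR}(\Lambda_h)$ similar to $\Omega_\theta$.
   Context: $\Lambda_h = \begin{bmatrix} 1 & -1/2 \\ 0 & \sqrt3/2\end{bmatrix}\mathbb{Z}^2$ is the hexagonal lattice. For a full-rank lattice $\Gamma = A\mathbb{Z}^2\subset\mathbb{R}^2$, $\det\Gamma = |\det A|$, $|\Gamma| = \min\{\|y\|^2 : y\in\Gamma\setminus\{0\}\}$, and for $\Gamma\subseteq\Lambda_h$, $|\Lambda_h:\Gamma| = \det\Gamma/\det\Lambda_h$. $\Gamma$ is well-rounded (WR) if it has a basis of vectors of squared norm $|\Gamma|$ (a minimal basis); such a basis can be chosen with angle in $[\pi/3,\pi/2]$ between its vectors, and this angle $\theta(\Gamma)$ is an invariant of $\Gamma$. $\mathrm{WR}(\Lambda_h)$ is the set of full-rank WR sublattices of $\Lambda_h$, and $C_h(\theta) =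 \{\Omega\in\mathrm{WR}(\Lambda_h) : \theta(\Omega)=\theta\}$. Lattices $\Gamma_1,\Gamma_2$ are similar if $\Gamma_2=\alpha A\Gamma_1$ for some nonzero real $\alpha$ and $A\in O_2(\mathbb{R})$. *)

From Stdlib Require Import Reals ZArith Arith.
Open Scope R_scope.

Definition pt := (R * R)%type.

(* B Z^2 where B has columns b1, b2 *)
Definition lat_span (b1 b2 : pt) : pt -> Prop :=
  fun z => exists k l : Z,
    z = (IZR k * fst b1 + IZR l * fst b2, IZR k * snd b1 + IZR l * snd b2).

Definition det2 (b1 b2 : pt) : R := fst b1 * snd b2 - snd b1 * fst b2.
Definition dot (x y : pt) : R := fst x * fst y + snd x * snd y.
Definition norm2 (x : pt) : R := dot x x.
Definition origin : pt := (0, 0).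

Definition is_basis (G : pt -> Prop) (b1 b2 : pt) : Prop :=
  det2 b1 b2 <> 0 /\ forall z, G z <-> lat_span b1 b2 z.

Definition full_lattice (G : pt -> Prop) : Prop :=
  exists b1 b2, is_basis G b1 b2.

(* det G = d : G is a full-rank lattice and |det A| = d for every
   (equivalently, some) matrix A with G = A Z^2 *)
Definition lattice_det (G : pt -> Prop) (d : R) : Prop :=
  full_lattice G /\ forall b1 b2, is_basis G b1 b2 -> Rabs (det2 b1 b2) = d.

(* |G| = mn : minimum of squared norms of nonzero vectors of G *)
Definition lattice_min (G : pt -> Prop) (mn : R) : Prop :=
  (exists y, G y /\ y <> origin /\ norm2 y = mn) /\
  (forall y, G y -> y <> origin -> mn <= norm2 y).

Definition minimal_basis (G : pt -> Prop) (b1 b2 : pt) : Prop :=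
  is_basis G b1 b2 /\ exists mn, lattice_min G mn /\ norm2 b1 = mn /\ norm2 b2 = mn.

Definition well_rounded (G : pt -> Prop) : Prop :=
  full_lattice G /\ exists b1 b2, minimal_basis G b1 b2.

Definition Lambda_h : pt -> Prop := lat_span (1, 0) (-(1/2), sqrt 3 / 2).

Definition sublattice (G H : pt -> Prop) : Prop := forall z, G z -> H z.

Definition WR_h (G : pt -> Prop) : Prop := sublattice G Lambda_h /\ well_rounded G.

Definition index_h (G : pt -> Prop) (k : R) : Prop :=
  sublattice G Lambda_h /\
  exists dG dL, lattice_det G dG /\ lattice_det Lambda_h dL /\ k = dG / dL.

(* theta(G) = th : G has a minimal basis whose vectors form the angle th,
   with th in [pi/3, pi/2] (the angle between nonzero vectors x, y is the
   t in [0, pi] with cos t = <x,y>/(|x||y|)) *)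
Definition wr_angle (G : pt -> Prop) (th : R) : Prop :=
  PI / 3 <= th <= PI / 2 /\
  exists b1 b2, minimal_basis G b1 b2 /\
    dot b1 b2 = cos th * (sqrt (norm2 b1) * sqrt (norm2 b2)).

Definition C_h (th : R) (G : pt -> Prop) : Prop := WR_h G /\ wr_angle G th.

Definition similar (G1 G2 : pt -> Prop) : Prop :=
  exists alpha a b c d : R,
    alpha <> 0 /\ a * a + c * c = 1 /\ b * b + d * d = 1 /\ a * b + c * d = 0 /\
    forall z, G2 z <-> exists y, G1 y /\
      z = (alpha * (a * fst y + b * snd y), alpha * (c * fst y + d * snd y)).

Definition Omega (m n : nat) : pt -> Prop :=
  lat_span (INR m, INR n * sqrt 3) (INR m, - (INR n * sqrt 3)).

From Stdlib Require Import Reals ZArith Arith Lia Lra.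
Open Scope R_scope.

(* The rhombic lattice spanned by (u, v) and (u, -v) has squared norms
   (k + l)^2 u^2 + (k - l)^2 v^2, where k + l and k - l have the same parity;
   so for 1/3 <= u^2/v^2 <= 3 its two generators are minimal and it is well
   rounded, with cos of the angle (u^2 - v^2)/(u^2 + v^2).  Omega_theta is the
   rhombic lattice with u = m, v = n sqrt 3, which sits in Lambda_h.
   Conversely, two rhombi with the same angle differ by a similarity that is
   read off from their diagonals, which are orthogonal. *)

Lemma lat_span_fst (b1 b2 : pt) : lat_span b1 b2 b1.
Proof. exists 1%Z, 0%Z. destruct b1, b2; simpl; f_equal; ring. Qed.

Lemma lat_span_snd (b1 b2 : pt) : lat_span b1 b2 b2.
Proof. exists 0%Z, 1%Z. destruct b1, b2; simpl; f_equal; ring. Qed.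

Lemma lat_span_incl (b1 b2 c1 c2 : pt) :
  lat_span c1 c2 b1 -> lat_span c1 c2 b2 ->
  sublattice (lat_span b1 b2) (lat_span c1 c2).
Proof.
  intros [k1 [l1 ->]] [k2 [l2 ->]] z [k [l ->]].
  exists (k * k1 + l * k2)%Z, (k * l1 + l * l2)%Z.
  rewrite !plus_IZR, !mult_IZR; simpl; f_equal; ring.
Qed.

Lemma det2_lat_span (b1 b2 : pt) (k1 l1 k2 l2 : Z) :
  det2 (IZR k1 * fst b1 + IZR l1 * fst b2, IZR k1 * snd b1 + IZR l1 * snd b2)
       (IZR k2 * fst b1 + IZR l2 * fst b2, IZR k2 * snd b1 + IZR l2 * snd b2)
  = IZR (k1 * l2 - l1 * k2) * det2 b1 b2.
Proof. unfold det2; simpl. rewrite minus_IZR, !mult_IZR. ring. Qed.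

(* Two bases of the same lattice differ by an integer matrix with integer
   inverse, hence of determinant +-1. *)
Lemma is_basis_Rabs_det2 (G : pt -> Prop) (b1 b2 c1 c2 : pt) :
  is_basis G b1 b2 -> is_basis G c1 c2 -> Rabs (det2 c1 c2) = Rabs (det2 b1 b2).
Proof.
  intros [Hb HGb] [_ HGc].
  destruct (proj1 (HGb c1) (proj2 (HGc c1) (lat_span_fst c1 c2))) as [k1 [l1 E1]].
  destruct (proj1 (HGb c2) (proj2 (HGc c2) (lat_span_snd c1 c2))) as [k2 [l2 E2]].
  destruct (proj1 (HGc b1) (proj2 (HGb b1) (lat_span_fst b1 b2))) as [u1 [v1 F1]].
  destruct (proj1 (HGc b2) (proj2 (HGb b2) (lat_span_snd b1 b2))) as [u2 [v2 F2]].
  assert (Dc : det2 c1 c2 = IZR (k1 * l2 - l1 * k2) * det2 b1 b2)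
    by (rewrite E1, E2; apply det2_lat_span).
  assert (Db : det2 b1 b2 = IZR (u1 * v2 - v1 * u2) * det2 c1 c2)
    by (rewrite F1 at 1; rewrite F2 at 1; apply det2_lat_span).
  assert (Hunit : ((k1 * l2 - l1 * k2) * (u1 * v2 - v1 * u2))%Z = 1%Z).
  { apply eq_IZR, (Rmult_eq_reg_r (det2 b1 b2)); auto.
    rewrite mult_IZR, Rmult_1_l. rewrite Db at 2. rewrite Dc. ring. }
  apply Z.eq_mul_1 in Hunit.
  rewrite Dc, Rabs_mult.
  destruct Hunit as [-> | ->]; rewrite Rabs_Zabs; simpl; ring.
Qed.

Lemma lattice_det_of_basis (G : pt -> Prop) (b1 b2 : pt) :
  is_basis G b1 b2 -> lattice_det G (Rabs (det2 b1 b2)).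
Proof.
  intros Hb. split; [now exists b1, b2|].
  intros c1 c2 Hc. exact (is_basis_Rabs_det2 G b1 b2 c1 c2 Hb Hc).
Qed.

Lemma norm2_pos (y : pt) : y <> origin -> 0 < norm2 y.
Proof.
  destruct y as [x1 x2]. unfold norm2, dot, origin; simpl. intros Hy.
  destruct (Req_dec x1 0), (Req_dec x2 0); subst; try (exfalso; now apply Hy); nra.
Qed.

Lemma lattice_min_pos (G : pt -> Prop) (mn : R) : lattice_min G mn -> 0 < mn.
Proof. intros [[y [_ [Hy <-]]] _]. now apply norm2_pos. Qed.

(* With equal norms mn the normalising factor |b1| |b2| in wr_angle is mn. *)
Lemma wr_angle_iff (G : pt -> Prop) (th : R) :
  wr_angle G th <->
  PI / 3 <= th <= PI / 2 /\
  exists b1 b2 mn, is_basis G b1 b2 /\ lattice_min G mn /\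
    norm2 b1 = mn /\ norm2 b2 = mn /\ dot b1 b2 = cos th * mn.
Proof.
  unfold wr_angle, minimal_basis. split.
  - intros [Hth [b1 [b2 [[Hb [mn [Hmn [N1 N2]]]] Hdot]]]].
    split; [exact Hth|]. exists b1, b2, mn.
    rewrite N1, N2, sqrt_sqrt in Hdot by (apply Rlt_le, (lattice_min_pos G), Hmn).
    tauto.
  - intros [Hth [b1 [b2 [mn [Hb [Hmn [N1 [N2 Hdot]]]]]]]].
    split; [exact Hth|]. exists b1, b2. split; [split; [exact Hb | now exists mn]|].
    rewrite N1, N2, sqrt_sqrt by (apply Rlt_le, (lattice_min_pos G), Hmn). exact Hdot.
Qed.

Section SimilarityMap.

Variables al a b c d : R.

Definition sim_map (y : pt) : pt :=
  (al * (a * fst y + b * snd y), al * (c * fst y + d * snd y)).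

Lemma lat_span_sim_map (o1 o2 z : pt) :
  lat_span (sim_map o1) (sim_map o2) z <-> exists y, lat_span o1 o2 y /\ z = sim_map y.
Proof.
  unfold sim_map. split.
  - intros [k [l ->]].
    exists (IZR k * fst o1 + IZR l * fst o2, IZR k * snd o1 + IZR l * snd o2).
    split; [now exists k, l | simpl; f_equal; ring].
  - intros [y [[k [l ->]] ->]]. exists k, l. simpl; f_equal; ring.
Qed.

Lemma det2_sim_map (x y : pt) :
  det2 (sim_map x) (sim_map y) = al * al * (a * d - b * c) * det2 x y.
Proof. unfold det2, sim_map; simpl. ring. Qed.

Hypotheses (Hac : a * a + c * c = 1) (Hbd : b * b + d * d = 1)
  (Habcd : a * b + c * d = 0).

Lemma dot_sim_map (x y : pt) : dot (sim_map x) (sim_map y) = al * al * dot x y.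
Proof.
  unfold dot, sim_map; simpl.
  transitivity (al * al * ((a * a + c * c) * (fst x * fst y) + (b * b + d * d) * (snd x * snd y)
    + (a * b + c * d) * (fst x * snd y + snd x * fst y))); [ring|].
  rewrite Hac, Hbd, Habcd. ring.
Qed.

Lemma norm2_sim_map (y : pt) : norm2 (sim_map y) = al * al * norm2 y.
Proof. apply dot_sim_map. Qed.

Lemma orthogonal_det_sqr : (a * d - b * c) * (a * d - b * c) = 1.
Proof.
  transitivity ((a * a + c * c) * (b * b + d * d) - (a * b + c * d) * (a * b + c * d));
    [ring|].
  rewrite Hac, Hbd, Habcd. ring.
Qed.

Hypothesis Hal : al <> 0.

Variables (G0 G : pt -> Prop).
Hypothesis HG : forall z, G z <-> exists y, G0 y /\ z = sim_map y.

Lemma is_basis_sim_map (o1 o2 : pt) :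
  is_basis G0 o1 o2 -> is_basis G (sim_map o1) (sim_map o2).
Proof.
  intros [Hdet HG0]. split.
  - rewrite det2_sim_map. pose proof orthogonal_det_sqr.
    assert (a * d - b * c <> 0) by (intros E; rewrite E in H; lra).
    repeat apply Rmult_integral_contrapositive_currified; auto.
  - intros z. rewrite HG, lat_span_sim_map.
    split; intros [y [Hy ->]]; exists y; split; auto; now apply HG0.
Qed.

Lemma lattice_min_sim_map (mn : R) :
  lattice_min G0 mn -> lattice_min G (al * al * mn).
Proof.
  intros [[y [Hy [Hy0 Ny]]] Hlow].
  assert (Hal2 : 0 < al * al) by nra.
  split.
  - exists (sim_map y). rewrite norm2_sim_map, Ny.
    split; [apply HG; now exists y|]. split; [|reflexivity].
    intros E. pose proof (norm2_pos y Hy0).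
    assert (Z0 : norm2 (sim_map y) = 0) by (rewrite E; unfold norm2, dot, origin; simpl; ring).
    rewrite norm2_sim_map in Z0. nra.
  - intros z Hz Hz0. apply HG in Hz. destruct Hz as [x [Hx ->]].
    rewrite norm2_sim_map. apply Rmult_le_compat_l; [lra|]. apply Hlow; auto.
    intros ->. apply Hz0. unfold sim_map, origin; simpl. f_equal; ring.
Qed.

End SimilarityMap.

Lemma wr_angle_similar (G0 G : pt -> Prop) (th : R) :
  wr_angle G0 th -> similar G0 G -> wr_angle G th.
Proof.
  rewrite !wr_angle_iff.
  intros [Hth [o1 [o2 [mn [Hb [Hmn [N1 [N2 Hdot]]]]]]]]
         [al [a [b [c [d [Hal [Hac [Hbd [Habcd HG]]]]]]]]].
  split; [exact Hth|].
  exists (sim_map al a b c d o1), (sim_map al a b c d o2), (al * al * mn).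
  rewrite !norm2_sim_map, dot_sim_map, N1, N2, Hdot by assumption.
  refine (conj _ (conj _ (conj eq_refl (conj eq_refl _)))); [| |ring].
  - exact (is_basis_sim_map al a b c d Hac Hbd Habcd Hal G0 G HG o1 o2 Hb).
  - exact (lattice_min_sim_map al a b c d Hac Hbd Habcd Hal G0 G HG mn Hmn).
Qed.

Definition rhombic (u v : R) : pt -> Prop := lat_span (u, v) (u, - v).

Lemma rhombic_is_basis (u v : R) :
  u <> 0 -> v <> 0 -> is_basis (rhombic u v) (u, v) (u, - v).
Proof.
  intros Hu Hv. split; [|tauto].
  unfold det2; simpl. replace (u * - v - v * u) with (-2 * (u * v)) by ring.
  apply Rmult_integral_contrapositive_currified; [lra|]. now apply Rmult_integral_contrapositive_currified.
Qed.

Lemma rhombic_lattice_min (u v : R) :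
  u <> 0 -> v <> 0 -> u * u <= 3 * (v * v) -> v * v <= 3 * (u * u) ->
  lattice_min (rhombic u v) (u * u + v * v).
Proof.
  intros Hu Hv Huv Hvu. split.
  - exists (u, v). split; [apply lat_span_fst|]. split; [|unfold norm2, dot; simpl; ring].
    unfold origin; intros E; injection E; lra.
  - intros y [k [l ->]] Hy. unfold norm2, dot; simpl.
    assert (Hu2 : 0 < u * u) by (apply Rsqr_pos_lt, Hu).
    assert (Hv2 : 0 < v * v) by (apply Rsqr_pos_lt, Hv).
    match goal with |- _ <= ?e => replace e with (IZR ((k + l) * (k + l)) * (u * u) + IZR ((k - l) * (k - l)) * (v * v))
      by (rewrite !mult_IZR, plus_IZR, minus_IZR; ring) end.
    (* k + l and k - l have the same parity, so one vanishing forces the other to be even. *)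
    destruct (Z.eq_dec (k + l) 0) as [Hs|Hs], (Z.eq_dec (k - l) 0) as [Hd|Hd].
    + exfalso. apply Hy. assert (k = 0%Z) by lia. assert (l = 0%Z) by lia. subst.
      unfold origin; simpl. f_equal; ring.
    + assert (4 <= IZR ((k - l) * (k - l))) by (apply IZR_le; nia).
      rewrite Hs. simpl. nra.
    + assert (4 <= IZR ((k + l) * (k + l))) by (apply IZR_le; nia).
      rewrite Hd. simpl. nra.
    + assert (1 <= IZR ((k + l) * (k + l))) by (apply IZR_le; nia).
      assert (1 <= IZR ((k - l) * (k - l))) by (apply IZR_le; nia). nra.
Qed.

Lemma rhombic_wr_angle (u v th : R) :
  u <> 0 -> v <> 0 -> u * u <= 3 * (v * v) -> v * v <= 3 * (u * u) ->
  PI / 3 <= th <= PI / 2 -> cos th = (u * u - v * v) / (u * u + v * v) ->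
  wr_angle (rhombic u v) th.
Proof.
  intros Hu Hv Huv Hvu Hth Hcos. apply wr_angle_iff. split; [exact Hth|].
  exists (u, v), (u, - v), (u * u + v * v).
  split; [now apply rhombic_is_basis|]. split; [now apply rhombic_lattice_min|].
  assert (0 < u * u) by (apply Rsqr_pos_lt, Hu).
  assert (0 < v * v) by (apply Rsqr_pos_lt, Hv).
  unfold norm2, dot; simpl. rewrite Hcos. repeat split; [ring | field; lra].
Qed.

(* The images of the orthogonal diagonals (2u, 0) and (0, 2v) of the rhombus
   are b1 + b2 and b1 - b2, which are orthogonal of the matching lengths. *)
Lemma sim_map_rhombic_exists (u v mn : R) (b1 b2 : pt) :
  u <> 0 -> v <> 0 -> 0 < mn -> norm2 b1 = mn -> norm2 b2 = mn ->
  dot b1 b2 = (u * u - v * v) / (u * u + v * v) * mn ->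
  exists al a b c d, al <> 0 /\
    a * a + c * c = 1 /\ b * b + d * d = 1 /\ a * b + c * d = 0 /\
    sim_map al a b c d (u, v) = b1 /\ sim_map al a b c d (u, - v) = b2.
Proof.
  intros Hu Hv Hmn N1 N2 Hdot.
  assert (Hu2 : 0 < u * u) by (apply Rsqr_pos_lt, Hu).
  assert (Hv2 : 0 < v * v) by (apply Rsqr_pos_lt, Hv).
  set (al := sqrt (mn / (u * u + v * v))).
  assert (Hal2 : al * al = mn / (u * u + v * v))
    by (apply sqrt_sqrt, Rlt_le, Rdiv_lt_0_compat; lra).
  assert (Hal : 0 < al) by (apply sqrt_lt_R0, Rdiv_lt_0_compat; lra).
  destruct b1 as [x1 y1], b2 as [x2 y2].
  unfold norm2, dot in N1, N2, Hdot; simpl in N1, N2, Hdot.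
  exists al, ((x1 + x2) / (2 * u * al)), ((x1 - x2) / (2 * v * al)),
    ((y1 + y2) / (2 * u * al)), ((y1 - y2) / (2 * v * al)).
  split; [lra|]. repeat split.
  - replace (_ + _) with ((x1 * x1 + y1 * y1 + (x2 * x2 + y2 * y2) + 2 * (x1 * x2 + y1 * y2))
      / (4 * (u * u) * (al * al))) by (field; lra).
    rewrite N1, N2, Hdot, Hal2. field. lra.
  - replace (_ + _) with ((x1 * x1 + y1 * y1 + (x2 * x2 + y2 * y2) - 2 * (x1 * x2 + y1 * y2))
      / (4 * (v * v) * (al * al))) by (field; lra).
    rewrite N1, N2, Hdot, Hal2. field. lra.
  - replace (_ + _) with ((x1 * x1 + y1 * y1 - (x2 * x2 + y2 * y2))
      / (4 * u * v * (al * al))) by (field; lra).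
    rewrite N1, N2. field. lra.
  - unfold sim_map; simpl. f_equal; field; lra.
  - unfold sim_map; simpl. f_equal; field; lra.
Qed.

Lemma similar_rhombic (u v th : R) (G : pt -> Prop) :
  u <> 0 -> v <> 0 -> cos th = (u * u - v * v) / (u * u + v * v) ->
  wr_angle G th -> similar (rhombic u v) G.
Proof.
  intros Hu Hv Hcos HG. apply wr_angle_iff in HG.
  destruct HG as [_ [b1 [b2 [mn [[_ Hb] [Hmn [N1 [N2 Hdot]]]]]]]].
  rewrite Hcos in Hdot.
  destruct (sim_map_rhombic_exists u v mn b1 b2 Hu Hv (lattice_min_pos G mn Hmn) N1 N2 Hdot)
    as [al [a [b [c [d [Hal [Hac [Hbd [Habcd [F1 F2]]]]]]]]]].
  exists al, a, b, c, d. do 4 (split; [assumption|]).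
  intros z. rewrite Hb, <- F1, <- F2. exact (lat_span_sim_map al a b c d _ _ z).
Qed.

Lemma well_rounded_of_wr_angle (G : pt -> Prop) (th : R) :
  wr_angle G th -> well_rounded G.
Proof.
  intros [_ [b1 [b2 [Hmb _]]]].
  split; [exists b1, b2; apply Hmb | now exists b1, b2].
Qed.

Lemma Omega_sublattice (m n : nat) : sublattice (Omega m n) Lambda_h.
Proof.
  (* (m, n sqrt 3) = (m + n) (1, 0) + 2n (-1/2, sqrt 3 / 2) *)
  apply lat_span_incl.
  - exists (Z.of_nat m + Z.of_nat n)%Z, (2 * Z.of_nat n)%Z.
    rewrite plus_IZR, mult_IZR, <- !INR_IZR_INZ. simpl. f_equal; field.
  - exists (Z.of_nat m - Z.of_nat n)%Z, (- (2 * Z.of_nat n))%Z.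
    rewrite minus_IZR, opp_IZR, mult_IZR, <- !INR_IZR_INZ. simpl. f_equal; field.
Qed.

Lemma Lambda_h_det : lattice_det Lambda_h (sqrt 3 / 2).
Proof.
  replace (sqrt 3 / 2) with (Rabs (det2 (1, 0) (-(1/2), sqrt 3 / 2))).
  - apply lattice_det_of_basis. split; [|tauto].
    unfold det2; simpl. pose proof (sqrt_lt_R0 3 ltac:(lra)). lra.
  - unfold det2; simpl. pose proof (sqrt_lt_R0 3 ltac:(lra)).
    rewrite Rabs_right; lra.
Qed.

Lemma index_h_of_det (G : pt -> Prop) (d : R) :
  sublattice G Lambda_h -> lattice_det G d -> index_h G (d / (sqrt 3 / 2)).
Proof.
  intros Hsub Hd. split; [exact Hsub|].
  exists d, (sqrt 3 / 2). exact (conj Hd (conj Lambda_h_det eq_refl)).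
Qed.

Lemma rhombic_det (u v : R) : 0 < u -> 0 < v -> lattice_det (rhombic u v) (2 * u * v).
Proof.
  intros Hu Hv. replace (2 * u * v) with (Rabs (det2 (u, v) (u, - v))).
  - apply lattice_det_of_basis, rhombic_is_basis; lra.
  - assert (0 < u * v) by (apply Rmult_lt_0_compat; lra).
    unfold det2; simpl. rewrite Rabs_left; [ring | nra].
Qed.

Lemma C_h_rhombic_iff (u v th : R) :
  u <> 0 -> v <> 0 -> cos th = (u * u - v * v) / (u * u + v * v) ->
  wr_angle (rhombic u v) th ->
  forall G : pt -> Prop, C_h th G <-> WR_h G /\ similar (rhombic u v) G.
Proof.
  intros Hu Hv Hcos Hang G. split.
  - intros [HWG HG]. split; [exact HWG | exact (similar_rhombic u v th G Hu Hv Hcos HG)].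
  - intros [HWG Hsim]. split; [exact HWG | exact (wr_angle_similar _ _ th Hang Hsim)].
Qed.

Lemma mul_sqrt3_sqr (N : R) : N * sqrt 3 * (N * sqrt 3) = 3 * (N * N).
Proof.
  transitivity (sqrt 3 * sqrt 3 * (N * N)); [ring|].
  rewrite sqrt_sqrt by lra. ring.
Qed.

Lemma sqrt3_ratio_rhombic_bounds (M N : R) :
  0 < N -> sqrt 3 < M / N <= 3 ->
  0 < M /\ M * M <= 3 * (N * sqrt 3 * (N * sqrt 3)) /\
  N * sqrt 3 * (N * sqrt 3) <= 3 * (M * M).
Proof.
  intros HN [Hlo Hhi].
  pose proof (sqrt_lt_R0 3 ltac:(lra)) as Hs0.
  apply (Rmult_lt_compat_r N) in Hlo; [field_simplify in Hlo|]; try lra.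
  apply (Rmult_le_compat_r N) in Hhi; [field_simplify in Hhi|]; try lra.
  assert (0 < sqrt 3 * N) by (apply Rmult_lt_0_compat; lra).
  assert (3 * (N * N) < M * M)
    by (rewrite <- mul_sqrt3_sqr; replace (N * sqrt 3) with (sqrt 3 * N) by ring; nra).
  assert (HM : 0 < M) by lra.
  rewrite mul_sqrt3_sqr. split; [exact HM|]. split; nra.
Qed.

Theorem lemma3p2 (m n : nat) (th : R) :
  (0 < m)%nat -> (0 < n)%nat -> Nat.gcd m n = 1%nat ->
  sqrt 3 < INR m / INR n <= 3 ->
  PI / 3 <= th < PI / 2 ->
  cos th = (INR m ^ 2 - 3 * INR n ^ 2) / (INR m ^ 2 + 3 * INR n ^ 2) ->
  sin th = (2 * INR m * INR n) / (INR m ^ 2 + 3 * INR n ^ 2) * sqrt 3 ->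
  WR_h (Omega m n) /\
  lattice_min (Omega m n) (INR m ^ 2 + 3 * INR n ^ 2) /\
  lattice_det (Omega m n) (2 * INR m * INR n * sqrt 3) /\
  index_h (Omega m n) (2 * (2 * INR m * INR n)) /\
  C_h th (Omega m n) /\
  (forall G : pt -> Prop, C_h th G <-> (WR_h G /\ similar (Omega m n) G)).
Proof.
  (* Coprimality and the value of sin th are not needed. *)
  intros _ hn _ Hratio hth hcos _.
  assert (HN : 0 < INR n) by (apply lt_0_INR; lia).
  pose proof (sqrt_lt_R0 3 ltac:(lra)) as Hs0.
  destruct (sqrt3_ratio_rhombic_bounds _ _ HN Hratio) as [HM [Huv Hvu]].
  set (M := INR m) in *. set (N := INR n) in *. set (v := N * sqrt 3) in *.
  assert (Hv : 0 < v) by (apply Rmult_lt_0_compat; lra).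
  assert (Hv2 : v * v = 3 * (N * N)) by apply mul_sqrt3_sqr.
  assert (Hq : M ^ 2 + 3 * N ^ 2 = M * M + v * v) by (rewrite Hv2; ring).
  assert (Hcos : cos th = (M * M - v * v) / (M * M + v * v))
    by (rewrite hcos, Hv2; f_equal; ring).
  assert (Hang : wr_angle (rhombic M v) th) by (apply rhombic_wr_angle; lra).
  assert (Hsub : sublattice (rhombic M v) Lambda_h) by apply Omega_sublattice.
  assert (Hdet : lattice_det (rhombic M v) (2 * M * N * sqrt 3))
    by (replace (2 * M * N * sqrt 3) with (2 * M * v) by (unfold v; ring);
        apply rhombic_det; lra).
  assert (HWR : WR_h (rhombic M v)) by exact (conj Hsub (well_rounded_of_wr_angle _ _ Hang)).
  change (Omega m n) with (rhombic M v). rewrite Hq.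
  split; [exact HWR|]. split; [apply rhombic_lattice_min; lra|].
  split; [exact Hdet|]. split.
  - replace (2 * (2 * M * N)) with (2 * M * N * sqrt 3 / (sqrt 3 / 2)) by (field; lra).
    exact (index_h_of_det _ _ Hsub Hdet).
  - split; [exact (conj HWR Hang)|]. apply C_h_rhombic_iff; auto; lra.
Qed.
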